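(* Let $\mathcal F\subseteq\{\mathcal X\to[0,1]\}$ be a hypothesis class. Then for all integers $T,k\ge1$, $$\underline{\mathcal R}_T^{kT}(\mathcal F)\le\inf_{\epsilon>0}\Big\{\sup_{Z\subseteq\mathcal X,\,|Z|=kT}\log\mathcal N(\mathcal F|_Z,\epsilon)+2\epsilon T\Big\}.$$
   Context: Setting: contexts $\mathcal X$, labels $\{0,1\}$, log loss. For $f\in\mathcal F$, $p_f(1\mid x)=f(x)$, $p_f(0\mid x)=1-f(x)$; learner actions $a$ are pmfs on $\{0,1\}$ with loss $\ell(a,(x,y))=-\log a(y)$, and $f$ incurs $-\log p_f(y\mid x)$. Regret: $\mathcal R(\mathcal F,x_{1:T},y_{1:T},a_{1:T})=\sum_{t}\ell(a_t,(x_t,y_t))-\inf_{f\in\mathcal F}\sum_t(-\log p_f(y_t\mid x_t))$. For finite $X\subseteq\mathcal X$, $\underline{\mathcal R}_T(\mathcal F,X)=\max_{x_1\in X}\inf_{a_1}\sup_{y_1}\cdots\max_{x_T\in X}\inf_{a_T}\sup_{y_T}\mathcal R(\mathcal F,x_{1:T},y_{1:T},a_{1:T})$ and $\underline{\mathcal R}_T^M(\mathcal F)=\max_{|X|=M}\underline{\mathcal R}_T(\mathcal F,X)$. For a class $\mathcal G$ of functions on a set $Z$, a set $\tilde{\mathcal G}$ is an $\epsilon$-covering if for every $g\in\mathcal G$ there is $\tilde g\in\tilde{\mathcal G}$ with $\sup_{x\in Z}|g(x)-\tilde g(x)|\le\epsilon$; $\mathcal N(\mathcal G,\epsilon)$ is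 the minimal size of such a covering. $\mathcal F|_Z$ is the restriction of $\mathcal F$ to $Z$. Logarithms are natural. *)

From HB Require Import structures.
From mathcomp Require Import all_boot all_order all_algebra.
From mathcomp Require Import all_classical all_reals all_analysis.
Set Implicit Arguments. Unset Strict Implicit. Unset Printing Implicit Defensive.
Import Order.TTheory GRing.Theory Num.Theory.
Local Open Scope classical_set_scope.
Local Open Scope ring_scope.
Local Open Scope ereal_scope.

Section LogLossDefs.
Variables (R : realType) (X : Type).

Definition nlog (p : R) : \bar R :=
  if p == 0%R then +oo else (- ln p)%:E.

Definition elog (x : \bar R) : \bar R :=
  match x with
  | r%:E => if r == 0%R then -oo else (ln r)%:E
  | +oo => +oo
  | -oo => -oo
  end.

Definition pf (f : X -> R) (x : X) (y : bool) : R :=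
  if y then f x else (1 - f x)%R.

(* learner action a : pmf on {0,1}, parametrised by q = a(1) in [0,1] *)
Definition pact (q : R) (y : bool) : R := if y then q else (1 - q)%R.

(* history entries: (x_t, y_t, q_t) *)
Definition learner_loss (h : seq (X * bool * R)) : \bar R :=
  \sum_(e <- h) nlog (pact e.2 e.1.2).

Definition comp_loss (f : X -> R) (h : seq (X * bool * R)) : \bar R :=
  \sum_(e <- h) nlog (pf f e.1.1 e.1.2).

(* Regret = learner loss - inf_f loss of f; the undefined case
   +oo - +oo is resolved as +oo (dual addition). *)
Definition regret (F : set (X -> R)) (h : seq (X * bool * R)) : \bar R :=
  dual_adde (learner_loss h) (- ereal_inf [set comp_loss f h | f in F]).

Fixpoint game (F : set (X -> R)) (Xs : set X) (n : nat)
    (h : seq (X * bool * R)) : \bar R :=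
  match n with
  | 0 => regret F h
  | n'.+1 =>
      ereal_sup [set
        ereal_inf [set
          ereal_sup [set game F Xs n' (rcons h (x, y, q)) | y in [set: bool]]
        | q in [set q : R | (0 <= q <= 1)%R]]
      | x in Xs]
  end.

Definition minimax_regret (F : set (X -> R)) (T : nat) (Xs : set X) : \bar R :=
  game F Xs T [::].

(* \underline{R}_T^M(F): max over context sets of size M,
   represented as ranges of injective maps 'I_M -> X *)
Definition minimax_regret_M (F : set (X -> R)) (T M : nat) : \bar R :=
  ereal_sup [set minimax_regret F T (range w)
            | w in [set w : 'I_M -> X | injective w]].

(* covering number N(F|_Z, eps) in sup-norm on Z (+oo if no finite cover) *)
Definition covnum (F : set (X -> R)) (Z : set X) (eps : R) : \bar R :=
  ereal_inf [set (n%:R)%:E | n in [set n : nat |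
    exists G : 'I_n -> X -> R,
      forall f, F f -> exists i : 'I_n, forall x, Z x -> (`|f x - G i x| <= eps)%R]].

End LogLossDefs.

From HB Require Import structures.
From mathcomp Require Import all_boot all_order all_algebra.
From mathcomp Require Import all_classical all_reals all_analysis.
From mathcomp Require Import lra.
Import Order.TTheory GRing.Theory Num.Theory.
Local Open Scope classical_set_scope.
Local Open Scope ring_scope.
Local Open Scope ereal_scope.

(* Fix eps > 0 and a context set
   Z, and let G_1, ..., G_n be an eps-cover of F on Z.  Each G_i is turned
   into a strictly interior "expert" predicting
     p_i(x) = (clamp (G_i x) + eps) / (1 + 2 eps),
   so that every f eps-close to G_i on Z satisfies
     p_f(y|x) <= (1 + 2 eps) p_i(y|x),
   i.e. f loses at most 2 eps per round less than expert i.  The learner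
   plays the Bayesian mixture of the experts.  With W(h) the total
   likelihood of the experts on the history h, the potential
   Phi(h) = learner loss + ln W(h) is invariant under a mixture round, and
   the regret of any history is at most Phi(h) + 2 eps |h|.  Backward
   induction on the game then bounds the value by Phi([::]) + 2 eps T
   = ln n + 2 eps T.  Choosing n = N(F|_Z, eps) (or an empty cover when F
   is empty, where the value is -oo) and taking sup over Z and inf over
   eps gives the theorem. *)

(* Clamping a real to [0, 1]: cover elements need not take values in [0, 1]. *)
Definition clamp01 {R : realType} (r : R) : R :=
  if (r < 0)%R then 0%R else if (1 < r)%R then 1%R else r.

Lemma clamp01_range {R : realType} (r : R) : (0 <= clamp01 r <= 1)%R.
Proof.
rewrite /clamp01; case: ifP => [_|r_ge0]; first by rewrite lexx ler01.
case: ifP => [_|r_le1]; first by rewrite ler01 lexx.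
by rewrite leNgt r_ge0 leNgt r_le1.
Qed.

Lemma clamp01_close {R : realType} (a g e : R) : (0 <= a <= 1)%R ->
  (`|a - g| <= e)%R -> (clamp01 g - e <= a <= clamp01 g + e)%R.
Proof.
rewrite ler_distl => /andP[a0 a1] /andP[ag1 ag2]; rewrite /clamp01.
case: ifP => [|/negbT]; rewrite -?leNgt => g0; first by apply/andP; split; lra.
by case: ifP => [|/negbT]; rewrite -?leNgt => g1; apply/andP; split; lra.
Qed.

Lemma pact_gt0 {R : realType} (q : R) (y : bool) :
  (0 < q < 1)%R -> (0 < pact q y)%R.
Proof. by case/andP=> q0 q1; case: y => /=; lra. Qed.

Lemma nlog_pos {R : realType} (p : R) : (0 < p)%R -> nlog p = (- ln p)%:E.
Proof. by move=> p0; rewrite /nlog gt_eqF. Qed.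

Lemma learner_loss_rcons {R : realType} {X : Type}
    (h : seq (X * bool * R)) (e : X * bool * R) :
  learner_loss (rcons h e) = learner_loss h + nlog (pact e.2 e.1.2).
Proof. by rewrite /learner_loss big_rcons. Qed.

Lemma learner_loss_neq_ninfty {R : realType} {X : Type}
    (h : seq (X * bool * R)) : learner_loss h != -oo.
Proof.
rewrite /learner_loss; elim: h => [|e h IH]; first by rewrite big_nil.
rewrite big_cons; move: IH; rewrite /nlog.
by case: ifP; case: (\sum_(_ <- _) _).
Qed.

Definition contexts_in {R : realType} {X : Type} (Z : set X)
    (h : seq (X * bool * R)) : Prop :=
  forall e, List.In e h -> Z e.1.1.

Lemma contexts_in_rcons {R : realType} {X : Type} (Z : set X)
    (h : seq (X * bool * R)) (e : X * bool * R) :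
  contexts_in Z h -> Z e.1.1 -> contexts_in Z (rcons h e).
Proof.
move=> hZ Ze e'; rewrite -cats1 => /List.in_app_iff [|[<-|[]]] //.
exact: hZ.
Qed.

Definition eps_cover {R : realType} {X : Type} (F : set (X -> R)) (Z : set X)
    (eps : R) {n : nat} (G : 'I_n -> X -> R) : Prop :=
  forall f, F f -> exists i, forall x, Z x -> (`|f x - G i x| <= eps)%R.

Section Mixture.
Context {R : realType} {X : Type} {n : nat} (G : 'I_n -> X -> R) (eps : R).
Hypothesis eps_gt0 : (0 < eps)%R.

Definition expert (i : 'I_n) (x : X) : R :=
  ((clamp01 (G i x) + eps) / (1 + 2 * eps))%R.

Definition weight (h : seq (X * bool * R)) (i : 'I_n) : R :=
  (\prod_(e <- h) pact (expert i e.1.1) e.1.2)%R.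

Definition total_weight (h : seq (X * bool * R)) : R :=
  (\sum_i weight h i)%R.

Definition mixture (h : seq (X * bool * R)) (x : X) : R :=
  ((\sum_i weight h i * expert i x) / total_weight h)%R.

Definition potential (h : seq (X * bool * R)) : \bar R :=
  learner_loss h + (ln (total_weight h))%:E.

Lemma expert_interior i x : (0 < expert i x < 1)%R.
Proof.
have := eps_gt0; have /andP[c0 c1] := clamp01_range (G i x) => e0.
have d0 : (0 < 1 + 2 * eps)%R by lra.
by rewrite /expert divr_gt0 ?ltr_pdivrMr //=; lra.
Qed.

Lemma weight_gt0 h i : (0 < weight h i)%R.
Proof.
rewrite /weight; elim: h => [|e h IH]; first by rewrite big_nil ltr01.
by rewrite big_cons mulr_gt0 // pact_gt0 // expert_interior.
Qed.

Lemma weight_le_total h i : (weight h i <= total_weight h)%R.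
Proof.
rewrite /total_weight (bigD1 i) //= lerDl.
by apply: sumr_ge0 => j _; apply/ltW/weight_gt0.
Qed.

Lemma total_weight_nil : total_weight [::] = n%:R.
Proof.
rewrite /total_weight /weight; under eq_bigr => i _ do rewrite big_nil.
by rewrite sumr_const card_ord.
Qed.

Lemma weight_rcons h e i :
  weight (rcons h e) i = (weight h i * pact (expert i e.1.1) e.1.2)%R.
Proof. by rewrite /weight big_rcons. Qed.

Lemma nlog_close (f : X -> R) i x y :
  (0 <= f x <= 1)%R -> (`|f x - G i x| <= eps)%R ->
  (- ln (pact (expert i x) y) - 2 * eps)%:E <= nlog (pf f x y).
Proof.
move=> /[dup] f01 /andP[f0 f1] close; have := eps_gt0; rewrite /nlog => e0.
case: ifP => [_|pf_neq0]; first exact: leey.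
have /andP[c1 c2] := clamp01_close _ _ _ f01 close.
have pf_gt0 : (0 < pf f x y)%R.
  by rewrite lt_def pf_neq0 /=; case: y {pf_neq0} => /=; lra.
have pe_gt0 : (0 < pact (expert i x) y)%R by apply/pact_gt0/expert_interior.
have d0 : (0 < 1 + 2 * eps)%R by lra.
have pf_le : (pf f x y <= pact (expert i x) y * (1 + 2 * eps))%R.
  rewrite /expert; case: y {pf_neq0 pf_gt0 pe_gt0} => /=.
    by rewrite divfK ?gt_eqF //; lra.
  by rewrite mulrBl mul1r divfK ?gt_eqF //; lra.
have ln_le : (ln (pf f x y) <= ln (pact (expert i x) y) + ln (1 + 2 * eps))%R.
  by rewrite -lnM ?posrE // ler_ln ?posrE // mulr_gt0.
have ln_small : (ln (1 + 2 * eps) <= 2 * eps)%R by apply: le_ln1Dx; lra.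
rewrite lee_fin; lra.
Qed.

Lemma comp_loss_lb (Z : set X) (f : X -> R) i h :
  (forall x, (0 <= f x <= 1)%R) ->
  (forall x, Z x -> (`|f x - G i x| <= eps)%R) -> contexts_in Z h ->
  (- ln (weight h i) - 2 * eps * (size h)%:R)%:E <= comp_loss f h.
Proof.
move=> f01 close; rewrite /comp_loss; elim: h => [|e h IH] hZ.
  by rewrite big_nil /weight big_nil ln1 mulr0n mulr0 subr0 oppr0.
have close_e : (`|f e.1.1 - G i e.1.1| <= eps)%R by apply/close/hZ; left.
have IH' := IH (fun e' He' => hZ e' (or_intror He')).
have step := nlog_close _ _ _ e.1.2 (f01 _) close_e.
rewrite big_cons; apply: le_trans (leeD step IH').
have pa_gt0 := pact_gt0 _ e.1.2 (expert_interior i e.1.1).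
have w_gt0 := weight_gt0 h i; have := eps_gt0.
rewrite -EFinD lee_fin [in weight _ _]/weight big_cons lnM ?posrE //.
by rewrite /= -addn1 natrD; lra.
Qed.

Section NonemptyCover.
Hypothesis n_gt0 : (0 < n)%N.

Lemma total_weight_gt0 h : (0 < total_weight h)%R.
Proof.
exact: lt_le_trans (weight_gt0 h (Ordinal n_gt0)) (weight_le_total _ _).
Qed.

Lemma mixture_range h x : (0 <= mixture h x <= 1)%R.
Proof.
have W_gt0 := total_weight_gt0 h.
have w_ge0 i : (0 <= weight h i)%R by exact/ltW/weight_gt0.
have p_ge0 i : (0 <= expert i x)%R by have /andP[/ltW] := expert_interior i x.
have p_le1 i : (expert i x <= 1)%R by have /andP[_ /ltW] := expert_interior i x.
rewrite /mixture divr_ge0 ?sumr_ge0 ?(ltW W_gt0) //=; last first.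
  by move=> i _; rewrite mulr_ge0.
rewrite ler_pdivrMr // mul1r; apply: ler_sum => i _.
by rewrite ler_piMr.
Qed.

Lemma pact_mixture h x y q :
  pact (mixture h x) y = (total_weight (rcons h (x, y, q)) / total_weight h)%R.
Proof.
rewrite /mixture /total_weight.
under [X in (_ = X / _)%R]eq_bigr => i _ do rewrite weight_rcons /=.
case: y => //=; rewrite -[X in (X - _)%R](@divff _ (\sum_i weight h i)%R).
  by rewrite -mulrBl -sumrB; congr (_ / _)%R; apply: eq_bigr => i _;
     rewrite mulrBr mulr1.
exact/lt0r_neq0/total_weight_gt0.
Qed.

Lemma potential_mixture_step h x y :
  potential (rcons h (x, y, mixture h x)) = potential h.
Proof.
have W_gt0 := total_weight_gt0 h.
have W'_gt0 := total_weight_gt0 (rcons h (x, y, mixture h x)).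
rewrite /potential learner_loss_rcons /= (pact_mixture _ _ _ (mixture h x)).
rewrite nlog_pos ?divr_gt0 //.
rewrite -addeA -EFinD lnM ?posrE ?invr_gt0 // lnV ?posrE //.
by congr (_ + _%:E); lra.
Qed.

Lemma regret_le_potential (Z : set X) (F : set (X -> R)) h :
  (forall f, F f -> forall x, (0 <= f x <= 1)%R) ->
  eps_cover F Z eps G -> contexts_in Z h ->
  regret F h <= potential h + (2 * eps * (size h)%:R)%:E.
Proof.
move=> HF cover hZ; rewrite /regret /potential -addeA -EFinD.
set c := (ln (total_weight h) + 2 * eps * (size h)%:R)%R.
have comp_lb : (- c)%:E <= ereal_inf [set comp_loss f h | f in F].
  apply: le_ereal_inf_tmp => _ [f Ff <-]; have [i close] := cover f Ff.
  apply: le_trans _ (comp_loss_lb _ _ _ _ (HF f Ff) close hZ); rewrite lee_fin /c.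
  have := weight_le_total h i.
  by rewrite -ler_ln ?posrE ?weight_gt0 ?total_weight_gt0 //; lra.
move: comp_lb (learner_loss_neq_ninfty h).
case: (ereal_inf _) => [s| |] //; case: (learner_loss h) => [r| |] //=.
- by rewrite /dual_adde /= -EFinD !lee_fin => ? _; lra.
- by rewrite /dual_adde /= leNye.
Qed.

Lemma game_le_potential (Z : set X) (F : set (X -> R)) m h :
  (forall f, F f -> forall x, (0 <= f x <= 1)%R) ->
  eps_cover F Z eps G -> contexts_in Z h ->
  game F Z m h <= potential h + (2 * eps * (size h + m)%:R)%:E.
Proof.
move=> HF cover; elim: m h => [|m IH] h hZ /=.
  by rewrite addn0; exact: (regret_le_potential Z F h HF cover hZ).
apply: ge_ereal_sup => _ [x Zx <-].
set next := fun q y => game F Z m (rcons h (x, y, q)).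
apply: (@le_trans _ _ (ereal_sup [set next (mixture h x) y | y in [set: bool]])).
  by apply: ereal_inf_lbound; exists (mixture h x) => //; exact: mixture_range.
apply: ge_ereal_sup => _ [y _ <-].
have hZ' := contexts_in_rcons Z h (x, y, mixture h x) hZ Zx.
apply: le_trans (IH _ hZ') _.
by rewrite potential_mixture_step size_rcons addSnnS.
Qed.

End NonemptyCover.
End Mixture.

(* With an empty class the competitor term is +oo, so the game value is -oo
   along any history of finite learner loss (the learner plays 1/2). *)
Lemma game_empty_class {R : realType} {X : Type} (F : set (X -> R)) (Z : set X)
    m (h : seq (X * bool * R)) :
  F = set0 -> learner_loss h != +oo -> game F Z m h = -oo.
Proof.
move=> F0; elim: m h => [|m IH] h h_fin /=.
  rewrite /regret F0 image_set0 ereal_inf0 /=.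
  by move: h_fin (learner_loss_neq_ninfty h); case: (learner_loss h).
apply/eqP; rewrite eq_le leNye andbT; apply: ge_ereal_sup => _ [x _ <-].
apply: le_trans (ereal_inf_lbound _) _.
  by exists (1 / 2)%R; [rewrite /= divr_ge0 ?ler_pdivrMr //=; lra|].
apply: ge_ereal_sup => _ [y _ <-]; rewrite IH // learner_loss_rcons.
rewrite /= nlog_pos; last by case: y => /=; lra.
by move: h_fin; case: (learner_loss h).
Qed.

Lemma covnum_attained {R : realType} {X : Type} (F : set (X -> R)) (Z : set X)
    (eps : R) :
  covnum F Z eps = +oo \/
  exists n (G : 'I_n -> X -> R),
    covnum F Z eps = (n%:R)%:E /\ eps_cover F Z eps G.
Proof.
set S := fun n : nat => exists G : 'I_n -> X -> R, eps_cover F Z eps G.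
have covE : covnum F Z eps = ereal_inf [set (n%:R)%:E | n in S] by [].
case: (pselect (exists n, S n)) => [[n Sn]|noS]; last first.
  left; rewrite covE (_ : [set _ | n in S] = set0) ?ereal_inf0 //.
  by apply/seteqP; split => // r [m Sm _]; case: noS; exists m.
have exS : exists n, `[< S n >] by exists n; exact/asboolP.
case: (ex_minnP exS) => m /asboolP Sm m_min; have [G cover] := Sm.
right; exists m, G; split=> //; apply/le_anti/andP; split.
  by apply: ereal_inf_lbound; exists m.
apply: le_ereal_inf_tmp => _ [p Sp <-]; rewrite lee_fin ler_nat.
exact/m_min/asboolP.
Qed.

Lemma game_le_covnum {R : realType} {X : Type} (F : set (X -> R))
    (HF : forall f, F f -> forall x, (0 <= f x <= 1)%R)
    (Z : set X) (eps : R) (T : nat) :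
  (0 < eps)%R ->
  minimax_regret F T Z <= elog (covnum F Z eps) + (2 * eps * T%:R)%:E.
Proof.
move=> eps_gt0; case: (covnum_attained F Z eps) => [->|[[|n] [G [-> cover]]]].
- by rewrite /= leey.
- have F0 : F = set0.
    by apply/seteqP; split => // f Ff; have [[]] := cover f Ff.
  by rewrite /minimax_regret game_empty_class ?leNye // /learner_loss big_nil.
- have empty_in_Z : contexts_in Z ([::] : seq (X * bool * R)) by [].
  have := game_le_potential G eps eps_gt0 isT Z F T [::] HF cover empty_in_Z.
  move/le_trans; apply.
  rewrite /potential /learner_loss big_nil add0e add0n total_weight_nil.
  by rewrite /= pnatr_eq0.
Qed.

Theorem theorem3p2 (R : realType) (X : Type) (F : set (X -> R))
  (HF : forall f, F f -> forall x, (0 <= f x <= 1)%R)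
  (T k : nat) (HT : (1 <= T)%N) (Hk : (1 <= k)%N) :
  minimax_regret_M F T (k * T) <=
  ereal_inf [set
    ereal_sup [set elog (covnum F (range z) eps)
              | z in [set z : 'I_(k * T) -> X | injective z]]
    + (2 * eps * T%:R)%:E
  | eps in [set eps : R | (0 < eps)%R]].
Proof.
apply: ge_ereal_sup => _ [w w_inj <-].
apply: le_ereal_inf_tmp => _ [eps eps_gt0 <-].
apply: le_trans (game_le_covnum F HF (range w) eps T eps_gt0) _.
by apply: leeD => //; apply: ereal_sup_ubound; exists w.
Qed.
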